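(* Let $m$ be odd and let $Q_{4m}=\langle a,b\mid a^{2m}=e,\ a^m=b^2,\ b^{-1}ab=a^{-1}\rangle$ be the dicyclic group of order $4m$; set $n=2m$. Then there is no inverse-closed subset $S\subseteq Q_{4m}\setminus\{e\}$ such that $\mathrm{Cay}(Q_{4m},S)$ is a non-trivial bipartite distance-regular graph with diameter $3$, i.e., a distance-regular graph with intersection array $\{k,k-1,k-\mu;1,\mu,k\}$ with $k<n-1$.
   Context: For a finite group $G$ with identity $e$ and a subset $S\subseteq G\setminus\{e\}$ with $S=S^{-1}$, the Cayley graph $\mathrm{Cay}(G,S)$ has vertex set $G$, two vertices $a,b$ being adjacent iff $ab^{-1}\in S$. A connected graph of diameter $d$ is distance-regular with intersection array $\{b_0,\dots,b_{d-1};c_1,\dots,c_d\}$ if for all vertices $x,y$ at distance $i$, the number of neighbours of $x$ at distance $i+1$ (resp. $i-1$) from $y$ is $b_i$ (resp. $c_i$). *)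

From mathcomp Require Import all_boot all_order all_fingroup.
Set Implicit Arguments. Unset Strict Implicit. Unset Printing Implicit Defensive.
Import GroupScope.
Local Open Scope group_scope.

Definition cay (gT : finGroupType) (G S : {set gT}) : rel gT :=
  fun x y => [&& x \in G, y \in G & x * y^-1 \in S].

Fixpoint nstep (T : finType) (e : rel T) (n : nat) (x y : T) : bool :=
  match n with
  | 0 => x == y
  | n'.+1 => [exists z, e x z && nstep e n' z y]
  end.

Definition isdist (T : finType) (e : rel T) (i : nat) (x y : T) : bool :=
  nstep e i x y && [forall j : 'I_i, ~~ nstep e j x y].

(* The graph (V, e) is connected, has diameter d, and is distance-regular
   with intersection array {b_0,...,b_{d-1}; c_1,...,c_d}
   (b = [:: b_0; ...; b_{d-1}], c = [:: c_1; ...; c_d]). *)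
Definition distance_regular (T : finType) (V : {set T}) (e : rel T)
    (d : nat) (b c : seq nat) : Prop :=
  (size b = d /\ size c = d /\
      (forall x y, x \in V -> y \in V -> exists2 i, i <= d & isdist e i x y) /\
      (exists x y, [/\ x \in V, y \in V & isdist e d x y]) /\
      (forall i x y, x \in V -> y \in V -> isdist e i x y -> i < d ->
         #|[set z in V | e x z && isdist e i.+1 z y]| = nth 0 b i) /\
    (forall i x y, x \in V -> y \in V -> isdist e i x y -> 1 <= i <= d ->
         #|[set z in V | e x z && isdist e i.-1 z y]| = nth 0 c i.-1))%N.

From mathcomp Require Import all_boot all_order all_fingroup.
From mathcomp Require Import cyclic zify.
Set Implicit Arguments. Unset Strict Implicit. Unset Printing Implicit Defensive.
Import GroupScope.

(* In a distance-regular graph whose intersection array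
   has a_i = 0 for all i (for instance {k, k-1, k-mu; 1, mu, k}), a neighbour
   of x is at distance i-1 or i+1 from y when x is at distance i from y, so
   the parity of the distance to a fixed vertex flips along every edge.  For
   a Cayley graph Cay(G,S), right translations are automorphisms, and this
   parity eps : G -> bool becomes a group homomorphism with eps s = true for
   s in S.  In Q_{4m} with m odd, a^m = b^2 forces eps a = false, so every
   s in S lies in the coset <a>b, hence s^2 = a^m. *)

Lemma isdist_uniq (T : finType) (e : rel T) i j x y :
  isdist e i x y -> isdist e j x y -> i = j.
Proof.
move=> /andP[walk_i /forallP short_i] /andP[walk_j /forallP short_j].
case: (ltngtP i j) => // [lt_ij | lt_ji].
  by move: (short_j (Ordinal lt_ij)); rewrite walk_i.
by move: (short_i (Ordinal lt_ji)); rewrite walk_j.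
Qed.

Lemma isdist0 (T : finType) (e : rel T) x : isdist e 0 x x.
Proof. by rewrite /isdist /= eqxx; apply/forallP => -[]. Qed.

Lemma isdist0_eq (T : finType) (e : rel T) x y : isdist e 0 x y -> x = y.
Proof. by case/andP => /eqP. Qed.

Lemma isdist1 (T : finType) (e : rel T) :
  irreflexive e -> forall x y, isdist e 1 x y = e x y.
Proof.
move=> e_irr x y; rewrite /isdist /=; apply/idP/idP.
  by case/andP => /existsP[z /andP[exz /eqP <-]].
move=> exy; apply/andP; split; first by apply/existsP; exists y; rewrite exy /=.
apply/forallP => -[[|//] _] /=; apply/negP => /eqP xy.
by move: exy; rewrite xy e_irr.
Qed.

Definition dist_parity (T : finType) (e : rel T) (d : nat) (x y : T) : bool :=
  [exists j : 'I_d.+1, isdist e j x y && odd j].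

(* The intersection array {b_0,..,b_{d-1}; c_1,..,c_d} has a_i = 0, in the
   weak form b_0 <= b_i + c_i (with b_d = c_0 = 0): every neighbour of a
   vertex at distance i from y is at distance i-1 or i+1 from y. *)
Definition bipartite_array (d : nat) (b c : seq nat) : Prop :=
  forall i, i <= d ->
  nth 0 b 0 <= (if i < d then nth 0 b i else 0) + (if 0 < i then nth 0 c i.-1 else 0).

Lemma bipartite_array3 k mu :
  bipartite_array 3 [:: k; k - 1; k - mu]%N [:: 1; mu; k]%N.
Proof. by case=> [|[|[|[|//]]]] _ /=; lia. Qed.

Section DistanceRegular.

Variables (T : finType) (V : {set T}) (e : rel T) (d : nat) (b c : seq nat).
Hypotheses (e_sym : forall x y, e x y = e y x) (e_irr : irreflexive e)
  (e_V : forall x y, e x y -> (x \in V) && (y \in V)).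
Hypotheses (drg : distance_regular V e d b c) (d_gt0 : 0 < d).

Lemma drg_dist_le x y : x \in V -> y \in V -> exists2 i, i <= d & isdist e i x y.
Proof. by case: drg => _ [_ [conn _]]; apply: conn. Qed.

Lemma drg_valency x : x \in V -> #|[set z in V | e x z]| = nth 0 b 0.
Proof.
case: drg => _ [_ [_ [_ [card_b _]]]] xV.
rewrite -(card_b 0 x x xV xV (isdist0 e x) d_gt0).
by apply: eq_card => z; rewrite !inE (isdist1 e_irr) e_sym andbb.
Qed.

(* A vertex at distance d from some vertex has a neighbour one step further
   away than itself, so b_{d-1} > 0. *)
Lemma drg_last_b_pos : 0 < nth 0 b d.-1.
Proof.
case: drg => _ [_ [_ [[u [v [uV vV /andP[walk_uv /forallP short_uv]]]] [card_b _]]]].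
case: d walk_uv short_uv card_b d_gt0 => // d' /= /existsP[z /andP[uz walk_zv]] short_uv card_b _.
have zV : z \in V by case/andP: (e_V uz).
have dist_zv : isdist e d' z v.
  apply/andP; split=> //; apply/forallP => j; apply/negP => walk_j.
  have lt_j : j.+1 < d'.+1 by rewrite ltnS.
  by have := short_uv (Ordinal lt_j); rewrite /= negb_exists => /forallP/(_ z); rewrite uz walk_j.
rewrite -(card_b d' z v zV vV dist_zv (ltnSn _)); apply/card_gt0P; exists u.
rewrite !inE uV e_sym uz; apply/andP; split=> //.
rewrite /isdist /=; apply/andP; split; last exact/forallP.
by apply/existsP; exists z; rewrite uz.
Qed.

Hypothesis bip : bipartite_array d b c.

Lemma drg_dist_step i x y z : y \in V -> isdist e i x y -> e x z ->
  isdist e i.+1 z y \/ (0 < i /\ isdist e i.-1 z y).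
Proof.
case: drg => _ [_ [_ [_ [card_b card_c]]]] yV dist_xy exz.
have /andP[xV zV] := e_V exz.
have [i' le_i'd dist'] := drg_dist_le xV yV.
have le_id : i <= d by rewrite (isdist_uniq dist_xy dist').
set N := [set w in V | e x w].
set B := [set w in V | e x w && isdist e i.+1 w y].
set C := [set w in V | e x w && isdist e i.-1 w y].
have sub_BC : B :|: C \subset N.
  by apply/subsetP => w; rewrite !inE => /orP[]/and3P[-> ->].
have disj_BC : [disjoint B & C].
  rewrite -setI_eq0; apply/eqP/setP => w; rewrite !inE.
  apply/negP => /andP[/and3P[_ _ dB] /and3P[_ _ dC]].
  by move: (isdist_uniq dB dC); lia.
have card_N : #|N| <= #|B :|: C|.
  have -> : #|B :|: C| = #|B| + #|C| by apply/eqP; rewrite (leq_card_setU B C).2.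
  rewrite (drg_valency xV).
  apply: leq_trans (bip le_id) _; apply: leq_add.
    by case: ifP => // lt_id; rewrite (card_b i x y xV yV dist_xy lt_id).
  by case: ifP => // lt0i; rewrite (card_c i x y xV yV dist_xy) ?lt0i.
have zN : z \in N by rewrite inE zV exz.
have BC_N : B :|: C = N by apply/eqP; rewrite eqEcard sub_BC.
move: zN; rewrite -BC_N.
rewrite inE => /orP[]; rewrite inE => /and3P[_ _ dist_zy]; first by left.
case: i dist_xy dist_zy {le_id B C sub_BC disj_BC card_N BC_N} => [|i] dist_xy dist_zy; last by right.
by move: exz; rewrite (isdist0_eq dist_xy) -(isdist0_eq dist_zy) e_irr.
Qed.

Lemma dist_parityE j x y :
  x \in V -> y \in V -> isdist e j x y -> dist_parity e d x y = odd j.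
Proof.
move=> xV yV dist_j; have [i le_id dist_i] := drg_dist_le xV yV.
rewrite -(isdist_uniq dist_i dist_j); apply/existsP/idP.
  by case=> l /andP[dist_l odd_l]; rewrite -(isdist_uniq dist_l dist_i).
by move=> odd_i; exists (Ordinal (le_id : i < d.+1)); rewrite dist_i.
Qed.

Lemma dist_parity_adj x y z :
  y \in V -> e x z -> dist_parity e d z y = ~~ dist_parity e d x y.
Proof.
move=> yV exz; have /andP[xV zV] := e_V exz.
have [i _ dist_xy] := drg_dist_le xV yV.
rewrite (dist_parityE xV yV dist_xy).
case: (drg_dist_step yV dist_xy exz) => [dist_zy | [lt0i dist_zy]].
  by rewrite (dist_parityE zV yV dist_zy) /= ?negbK.
by rewrite (dist_parityE zV yV dist_zy); case: i lt0i {dist_xy dist_zy} => //= i; rewrite ?negbK.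
Qed.

End DistanceRegular.

Section CayleyParity.

Variables (gT : finGroupType) (G : {group gT}) (S : {set gT}).
Hypotheses (S_sub : S \subset G :\ 1) (S_inv : [set x^-1 | x in S] = S).

(* Inverse-closedness makes the Cayley graph undirected. *)
Lemma cay_sym x y : cay G S x y = cay G S y x.
Proof.
suff cayV u v : u * v^-1 \in S -> v * u^-1 \in S.
  by rewrite /cay; apply/idP/idP => /and3P[-> -> /cayV ->].
by move=> uvS; rewrite -S_inv -[v * u^-1]invgK invMg invgK imset_f.
Qed.

(* 1 \notin S makes it loopless. *)
Lemma cay_irr : irreflexive (cay G S).
Proof.
move=> x; rewrite /cay mulgV; apply/negP => /and3P[_ _ /(subsetP S_sub)].
by rewrite !inE eqxx.
Qed.

Lemma cay_V x y : cay G S x y -> (x \in G) && (y \in G).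
Proof. by case/and3P => -> ->. Qed.

Lemma S_subG s : s \in S -> s \in G.
Proof. by move/(subsetP S_sub); rewrite !inE => /andP[]. Qed.

Lemma cay_mulS s w : s \in S -> w \in G -> cay G S (s * w) w.
Proof. by move=> sS wG; rewrite /cay mulgK sS wG groupM // S_subG. Qed.

Lemma cay_nbrs1 z : cay G S z 1 = (z \in S).
Proof.
rewrite /cay invg1 mulg1 group1 /=.
by case zS: (z \in S); rewrite ?andbF ?andbT ?S_subG.
Qed.

(* If every element of S squares to x, then x is adjacent to every neighbour
   of 1; this computes c_2 when x is at distance 2 from 1. *)
Lemma cay_common_nbrs x : x \in G -> (forall s, s \in S -> s * s = x) ->
  #|[set z in G | cay G S x z && isdist (cay G S) 1 z 1]| = #|S|.
Proof.
move=> xG sq_S; apply: eq_card => z; rewrite !inE (isdist1 cay_irr) cay_nbrs1.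
case zS: (z \in S); rewrite ?andbF //= andbT.
by rewrite /cay xG S_subG // -(sq_S z zS) mulgK.
Qed.

Variables (d : nat) (b c : seq nat).
Hypotheses (drg : distance_regular G (cay G S) d b c) (d_gt0 : 0 < d)
  (bip : bipartite_array d b c).

Local Notation eps g := (dist_parity (cay G S) d g 1).

Lemma cay_valency : #|S| = nth 0 b 0.
Proof.
rewrite -(drg_valency cay_sym cay_irr drg d_gt0 (group1 G)).
by apply: eq_card => z; rewrite inE cay_sym cay_nbrs1 andb_idl // => /S_subG.
Qed.

Lemma cay_last_b_pos : 0 < nth 0 b d.-1.
Proof. exact: drg_last_b_pos cay_sym cay_V drg d_gt0. Qed.

Lemma eps1 : eps 1 = false.
Proof. by rewrite (dist_parityE drg (group1 G) (group1 G) (isdist0 _ _)). Qed.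

Lemma eps_mulS s w : s \in S -> w \in G -> eps (s * w) = ~~ eps w.
Proof.
move=> sS wG.
by rewrite (dist_parity_adj cay_sym cay_irr cay_V drg d_gt0 bip (group1 G) (cay_mulS sS wG)) negbK.
Qed.

(* A walk of length j from x to y factors x y^-1 as a product of j elements
   of S, so it changes the parity by odd j. *)
Lemma eps_walk j x y h : nstep (cay G S) j x y -> y \in G -> h \in G ->
  eps (x * y^-1 * h) = odd j (+) eps h.
Proof.
elim: j x => [|j IH] x /= walk yG hG.
  by rewrite (eqP walk) mulgV mul1g.
case/existsP: walk => z /andP[cay_xz walk_zy].
have /and3P[_ zG xzS] := cay_xz.
have rest : z * y^-1 * h \in G by rewrite !groupM ?groupV.
have -> : x * y^-1 * h = (x * z^-1) * (z * y^-1 * h) by rewrite !mulgA mulgKV.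
by rewrite (eps_mulS xzS) // IH // addNb.
Qed.

Lemma epsM g h : g \in G -> h \in G -> eps (g * h) = eps g (+) eps h.
Proof.
move=> gG hG; have [j _ /andP[walk_j _]] := drg_dist_le drg gG (group1 G).
have eps_g : eps g = odd j.
  by have := eps_walk walk_j (group1 G) (group1 G); rewrite invg1 !mulg1 eps1 addbF.
by rewrite eps_g -(eps_walk walk_j (group1 G) hG) invg1 mulg1.
Qed.

Lemma epsX g n : g \in G -> eps (g ^+ n) = odd n && eps g.
Proof.
move=> gG; elim: n => [|n IH]; first by rewrite expg0 eps1.
by rewrite expgS epsM ?groupX // IH /=; case: (odd n); case: (eps g).
Qed.

Lemma eps_cycle g h n : odd n -> g \in G -> h \in G -> g ^+ n = h ^+ 2 ->
  forall y, y \in <[g]> -> eps y = false.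
Proof.
move=> odd_n gG hG gn_h2; have eps_g : eps g = false.
  by move: (congr1 (fun y => eps y) gn_h2) => /=; rewrite !epsX // odd_n.
by move=> y /cycleP[k ->]; rewrite epsX // eps_g andbF.
Qed.

Lemma epsS s : s \in S -> eps s.
Proof. by move=> sS; rewrite -[s]mulg1 eps_mulS ?eps1. Qed.

End CayleyParity.

Section Dicyclic.

Variables (gT : finGroupType) (G : {group gT}) (a b : gT) (m : nat).
Hypotheses (G_gen : G :=: <<[set a; b]>>) (am_b2 : a ^+ m = b ^+ 2)
  (a_conj : a ^ b = a^-1).

Lemma conj_cycle y : y \in <[a]> -> y ^ b = y^-1.
Proof. by case/cycleP => n ->; rewrite conjXg a_conj expVgn. Qed.

Lemma b_mul_cycle y : y \in <[a]> -> b * y = y^-1 * b.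
Proof. by move=> yA; rewrite [RHS]conjgC conj_cycle ?groupV // invgK. Qed.

Lemma dicyclic_cover : G \subset <[a]> :|: <[a]> :* b.
Proof.
pose U : {set gT} := <[a]> :|: <[a]> :* b.
have U_mul x t : x \in U -> t \in [set a; b] -> x * t \in U.
  have b2A : b * b \in <[a]> by rewrite -expg2 -am_b2 mem_cycle.
  rewrite !inE !mem_rcoset => /orP[xA | xbA] /orP[]/eqP ->.
  - by rewrite groupM ?cycle_id.
  - by rewrite mulgK xA orbT.
  - rewrite -[x](mulgKV b) -(mulgA _ b a) b_mul_cycle ?cycle_id // mulgA mulgK.
    by apply/orP; right; rewrite groupM ?groupV ?cycle_id.
  - by apply/orP; left; rewrite -[x](mulgKV b) -mulgA groupM.
apply/subsetP => g; rewrite G_gen => /gen_prodgP[n [t t_gen ->]].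
elim: n t t_gen => [|n IH] t t_gen; first by rewrite big_ord0 !inE group1.
rewrite big_ord_recr /=; apply: U_mul (t_gen _).
exact: (IH (fun i => t (widen_ord (leqnSn n) i))).
Qed.

Lemma coset_sq y : y \in <[a]> -> (y * b) ^+ 2 = a ^+ m.
Proof. by move=> yA; rewrite expg2 -mulgA (mulgA b) b_mul_cycle // -mulgA mulKVg -expg2 am_b2. Qed.

(* a^m is non-trivial when |G| = 4m, since otherwise |G| <= 2 #[a] <= 2m. *)
Lemma am_neq1 : 0 < m -> #|G| = (4 * m)%N -> a ^+ m != 1.
Proof.
move=> m_gt0 cardG; apply/eqP => am1.
have ord_a : #[a] <= m by apply: dvdn_leq => //; rewrite order_dvdn am1.
have := leq_trans (subset_leq_card dicyclic_cover) (leq_card_setU _ _).1.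
rewrite cardG card_rcoset -[#|<[a]>|]/#[a]; lia.
Qed.

End Dicyclic.

Theorem proposition5p3 (gT : finGroupType) (G : {group gT}) (a b : gT) (m : nat) :
  odd m ->
  G :=: <<[set a; b]>> ->
  a ^+ (2 * m) = 1 ->
  a ^+ m = b ^+ 2 ->
  a ^ b = a^-1 ->
  #|G| = (4 * m)%N ->
  forall S : {set gT},
    S \subset G :\ 1 ->
    [set x^-1 | x in S] = S ->
    ~ (exists k mu : nat,
         (k < 2 * m - 1)%N /\
         distance_regular G (cay G S) 3 [:: k; k - 1; k - mu]%N [:: 1; mu; k]%N).
Proof.
move=> m_odd G_gen _ am_b2 a_conj cardG S S_sub S_inv [k [mu [_ drg]]].
have bip := bipartite_array3 k mu.
have [aG bG] : a \in G /\ b \in G by rewrite !G_gen !mem_gen ?inE ?eqxx ?orbT.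
have amG : a ^+ m \in G := groupX m aG.
have eps_a := eps_cycle S_sub S_inv drg isT bip m_odd aG bG am_b2.
(* every s in S lies in the coset <a>b, so s^2 = a^m *)
have S_sq s : s \in S -> s * s = a ^+ m.
  move=> sS; move: (subsetP (dicyclic_cover G_gen am_b2 a_conj) s (S_subG S_sub sS)).
  rewrite inE => /orP[sA | ]; first by move: (epsS S_sub S_inv drg isT bip sS); rewrite eps_a.
  by rewrite mem_rcoset => yA; rewrite -(mulgKV b s) -expg2 (coset_sq am_b2 a_conj).
have am_dist2 : isdist (cay G S) 2 (a ^+ m) 1.
  have [j le_j3 dist_j] := drg_dist_le drg amG (group1 G).
  have := dist_parityE drg amG (group1 G) dist_j; rewrite eps_a ?mem_cycle //.
  case: j le_j3 dist_j => [|[|[|[|//]]]] //= _ dist0.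
  by have := am_neq1 G_gen am_b2 a_conj (odd_gt0 m_odd) cardG; rewrite (isdist0_eq dist0) eqxx.
(* a^m is adjacent to every neighbour of 1, hence c_2 = k *)
have mu_k : mu = k.
  case: (drg) => _ [_ [_ [_ [_ card_c]]]].
  have /= <- := card_c 2 _ _ amG (group1 G) am_dist2 isT.
  have /= <- := cay_valency S_sub S_inv drg isT.
  by rewrite cay_common_nbrs.
by have := cay_last_b_pos S_inv drg isT; rewrite /= mu_k subnn.
Qed.
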